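(* Let $N\ge3$ and $1\le k\le N-1$ be integers with $\gcd(N,k)=1$, and let $p$ be an odd prime with $p\equiv\pm1$ or $0\pmod N$. Let $\tau$ lie in the upper half-plane, $q=e^{2\pi i\tau}$, and $q_j=e^{2\pi i(\tau+j)/p}$ for $j=0,\dots,p-1$. Then \[\left(1+\chi_{-N}(p)p^2\right)J_{N\tau}(q^k)=\sum_{j=0}^{p-1}p\,J_{\frac{N(\tau+j)}{p}}(q_j^k)+\chi_{-N}(p)\,J_{Np\tau}(q^{pk}).\]
   Context: Let $J(z)=\log|z|\log|1-z|$ and $B_3(x)=x^3-\frac32x^2+\frac12x$. For $\sigma$ in the upper half-plane, with $Q=e^{2\pi i\sigma}$, and $z\in\mathbb{C}^*$ not in $Q^{\mathbb{Z}}$, define \[J_\sigma(z)=\sum_{n=0}^\infty J(zQ^n)-\sum_{n=1}^\infty J(z^{-1}Q^n)+\frac13\log^2|Q|\,B_3\!\left(\frac{\log|z|}{\log|Q|}\right).\] Here $\chi_{-N}(p)$ equals $1$ if $p\equiv1\pmod N$, $-1$ if $p\equiv-1\pmod N$, and $0$ if $p\equiv0\pmod N$. *)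

From Stdlib Require Import Reals ZArith Znumtheory Arith.
From Coquelicot Require Export Coquelicot.
Open Scope R_scope.

Definition cexp (w : C) : C :=
  (exp (fst w) * cos (snd w), exp (fst w) * sin (snd w)).

Fixpoint cpow (z : C) (n : nat) : C :=
  match n with O => RtoC 1 | S m => Cmult z (cpow z m) end.

Definition Jfun (z : C) : R := ln (Cmod z) * ln (Cmod (Cminus (RtoC 1) z)).

Definition B3 (x : R) : R := x ^ 3 - 3 / 2 * x ^ 2 + 1 / 2 * x.

Definition Qof (sigma : C) : C := cexp (Cmult (RtoC (2 * PI)) (Cmult Ci sigma)).

Definition Jsigma (sigma z : C) : R :=
  let Q := Qof sigma in
  Series (fun n => Jfun (Cmult z (cpow Q n)))
  - Series (fun n => Jfun (Cmult (Cinv z) (cpow Q (S n))))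
  + 1 / 3 * (ln (Cmod Q)) ^ 2 * B3 (ln (Cmod z) / ln (Cmod Q)).

Definition chiN (N p : nat) : R :=
  if Nat.eqb (Nat.modulo p N) 1 then 1
  else if Nat.eqb (Nat.modulo p N) (N - 1) then -1
  else 0.

(* Write [g_x(m) = J(x^m)].  When [Q = x^N] with [0 < |x| < 1], the two series defining
   [J_sigma(x^k)] are the sums of [g_x(m)] over [m ≡ k] and over [m ≡ -k (mod N)], and the
   [B_3] term only involves [log |x|].  Put [w = e^{2 pi i tau/p}] and [zeta = e^{2 pi i/p}],
   so that [q = w^p] and [q_j = w zeta^j].  Because [prod_j (1 - y zeta^{jm}) = 1 - y^p] when
   [p] does not divide [m], the distribution relation
     [p sum_j g_{q_j}(m) = g_q(m)] if [p ∤ m],   [= p^2 g_q(m/p)] if [p | m]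
   holds.  Splitting each residue series along [p | m] and substituting [m = p m'] leaves
   series over the [m'] with [p m' ≡ ±k (mod N)]; these are the original residue series
   twisted by [chi_{-N}(p)], and they vanish when [N | p]. *)

From Stdlib Require Import Reals ZArith Znumtheory Arith Lia Lra.
From Coquelicot Require Import Coquelicot.
From HB Require Import structures.
From mathcomp Require ssreflect ssrfun ssrbool eqtype ssrnat seq choice fintype bigop ssralg poly Rstruct.
Open Scope R_scope.

Lemma cexp_add (a b : C) : cexp (a + b) = (cexp a * cexp b)%C.
Proof.
  destruct a as [a1 a2], b as [b1 b2]. unfold cexp. simpl.
  rewrite exp_plus, cos_plus, sin_plus.
  apply injective_projections; simpl; ring.
Qed.

Lemma cexp_0 : cexp 0 = 1.
Proof.
  unfold cexp. simpl. rewrite exp_0, cos_0, sin_0.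
  apply injective_projections; simpl; ring.
Qed.

Lemma Cmod_cexp (a : C) : Cmod (cexp a) = exp (Re a).
Proof.
  unfold cexp, Cmod, Re. cbn [fst snd].
  replace ((exp (fst a) * cos (snd a)) ^ 2 + (exp (fst a) * sin (snd a)) ^ 2)
    with (exp (fst a) ^ 2)
    by (pose proof (sin2_cos2 (snd a)) as Hsc; unfold Rsqr in Hsc; nra).
  apply sqrt_pow2. left. apply exp_pos.
Qed.

Lemma Qof_add (a b : C) : Qof (a + b) = (Qof a * Qof b)%C.
Proof. unfold Qof. rewrite <- cexp_add. f_equal. ring. Qed.

Lemma Qof_nat (n : nat) (s : C) : Qof (INR n * s) = (Qof s ^ n)%C.
Proof.
  induction n as [|n IH].
  - simpl. unfold Qof. rewrite <- cexp_0. f_equal. ring.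
  - rewrite Cpow_S, <- IH, <- Qof_add, S_INR, RtoC_plus. f_equal. ring.
Qed.

Lemma Cmod_Qof (s : C) : Cmod (Qof s) = exp (- (2 * PI * Im s)).
Proof. unfold Qof. rewrite Cmod_cexp. f_equal. unfold Re, Im. simpl. ring. Qed.

Lemma Cmod_Qof_bounds (s : C) : 0 < Im s -> 0 < Cmod (Qof s) < 1.
Proof.
  intros Hs. rewrite Cmod_Qof. split; [apply exp_pos|].
  rewrite <- exp_0. apply exp_increasing. pose proof PI_RGT_0. nra.
Qed.

Lemma Cmod_pow_bounds (x : C) n : 0 < Cmod x < 1 -> (0 < n)%nat -> 0 < Cmod (x ^ n)%C < 1.
Proof.
  intros Hx Hn. rewrite Cmod_pow.
  split; [apply pow_lt; lra|apply pow_lt_1_compat; [lra|lia]].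
Qed.

Definition zeta (n : nat) : C := Qof (/ INR n).

Lemma zeta_pow (n t : nat) : (0 < n)%nat ->
  (zeta n ^ t)%C = (cos (2 * PI * (INR t / INR n)), sin (2 * PI * (INR t / INR n))).
Proof.
  intros Hn. assert (Hn' : INR n <> 0) by (apply not_0_INR; lia).
  unfold zeta. rewrite <- Qof_nat. unfold Qof.
  replace (RtoC (2 * PI) * (Ci * (INR t * / INR n)))%C with ((0, 2 * PI * (INR t / INR n)) : C)
    by (apply injective_projections; simpl; field; exact Hn').
  unfold cexp. simpl. rewrite exp_0, !Rmult_1_l. reflexivity.
Qed.

Lemma Cmod_zeta_pow (n t : nat) : Cmod (zeta n ^ t) = 1.
Proof.
  rewrite Cmod_pow. unfold zeta. rewrite Cmod_Qof.
  replace (Im (/ INR n)) with 0 by (unfold Im, Cinv; simpl; unfold Rdiv; ring).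
  rewrite Rmult_0_r, Ropp_0, exp_0. apply pow1.
Qed.

Lemma unit_circle_ne_1 (th : R) : 0 < th < 2 * PI -> ((cos th, sin th) : C) <> 1%C.
Proof.
  intros Hth E. injection E as Hc Hs. pose proof PI_RGT_0.
  destruct (Rtotal_order th PI) as [Hl|[He|Hg]].
  - assert (0 < sin th) by (apply sin_gt_0; lra). lra.
  - rewrite He, cos_PI in Hc. lra.
  - assert (sin th < 0) by (apply sin_lt_0; lra). lra.
Qed.

Lemma zeta_pow_eq1 (n t : nat) : (0 < n)%nat -> (zeta n ^ t)%C = 1 <-> (t mod n = 0)%nat.
Proof.
  intros Hn.
  assert (Hzn : (zeta n ^ n)%C = 1).
  { rewrite zeta_pow by exact Hn. unfold Rdiv. rewrite Rinv_r by (apply not_0_INR; lia).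
    rewrite Rmult_1_r, cos_2PI, sin_2PI. reflexivity. }
  assert (Hmod : (zeta n ^ t)%C = (zeta n ^ (t mod n))%C).
  { rewrite (Nat.div_mod_eq t n) at 1.
    rewrite Cpow_add_r, Cpow_mult_r, Hzn, Cpow_1_l, Cmult_1_l. reflexivity. }
  rewrite Hmod.
  assert (Hb := Nat.mod_upper_bound t n ltac:(lia)).
  set (b := (t mod n)%nat) in *.
  split; intros Hbn.
  - destruct (Nat.eq_dec b 0) as [|Hb0]; [assumption|exfalso].
    rewrite zeta_pow in Hbn by exact Hn. revert Hbn. apply unit_circle_ne_1.
    assert (0 < INR b / INR n < 1).
    { assert (0 < INR b) by (apply lt_0_INR; lia). assert (INR b < INR n) by (apply lt_INR; lia).
      split; [apply Rdiv_lt_0_compat; lra|].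
      apply Rmult_lt_reg_r with (INR n); [lra|]. unfold Rdiv. rewrite Rmult_assoc, Rinv_l; lra. }
    pose proof PI_RGT_0. nra.
  - rewrite Hbn. reflexivity.
Qed.

Lemma Cmod_mul_zeta_pow (w : C) n j : Cmod (w * zeta n ^ j)%C = Cmod w.
Proof. rewrite Cmod_mult, Cmod_zeta_pow, Rmult_1_r. reflexivity. Qed.

Lemma RtoC_INR_neq_0 n : (0 < n)%nat -> RtoC (INR n) <> 0%C.
Proof. intros Hn E. injection E. apply not_0_INR. lia. Qed.

Lemma Im_div_nat (s : C) n : (0 < n)%nat -> Im (s / INR n) = Im s / INR n.
Proof.
  intros Hn. assert (INR n <> 0) by (apply not_0_INR; lia).
  unfold Im, Cdiv, Cinv, Cmult. simpl. field. assumption.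
Qed.

Lemma Qof_div_nat_pow (s : C) n : (0 < n)%nat -> (Qof (s / INR n) ^ n)%C = Qof s.
Proof.
  intros Hn. rewrite <- Qof_nat. f_equal. field. apply RtoC_INR_neq_0, Hn.
Qed.

Lemma Qof_add_nat_div (s : C) n j : (0 < n)%nat ->
  Qof ((s + INR j) / INR n) = (Qof (s / INR n) * zeta n ^ j)%C.
Proof.
  intros Hn. unfold zeta. rewrite <- Qof_nat, <- Qof_add. f_equal.
  field. apply RtoC_INR_neq_0, Hn.
Qed.

Fixpoint cprod (f : nat -> C) (n : nat) : C :=
  match n with O => 1%C | S m => (cprod f m * f m)%C end.

(* [C] as a MathComp field, to use the factorisation of [X^n - 1] over a primitive root. *)
Module ComplexField.
Import ssreflect ssrfun ssrbool eqtype ssrnat seq choice fintype bigop ssralg poly Rstruct.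
Import GRing.Theory.
Local Open Scope ring_scope.

Definition CC : Type := C.
HB.instance Definition _ := Choice.copy CC (R * R)%type.

Lemma CplusA : associative (Cplus : CC -> CC -> CC).
Proof. by move=> *; rewrite Cplus_assoc. Qed.
Lemma Cplus_opp_l (x : CC) : Cplus (Copp x) x = RtoC 0.
Proof. by rewrite Cplus_comm Cplus_opp_r. Qed.
HB.instance Definition _ :=
  GRing.isZmodule.Build CC CplusA Cplus_comm Cplus_0_l Cplus_opp_l.

Lemma CmultA : associative (Cmult : CC -> CC -> CC).
Proof. by move=> *; rewrite Cmult_assoc. Qed.
Lemma C1_neq0 : (RtoC 1 : CC) != RtoC 0.
Proof. apply/eqP => H. injection H. exact: R1_neq_R0. Qed.
HB.instance Definition _ := GRing.Zmodule_isComNzRing.Build CC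
  CmultA Cmult_comm Cmult_1_l Cmult_plus_distr_r C1_neq0.

Lemma CmulVf (x : CC) : x != 0 -> Cmult (Cinv x) x = RtoC 1.
Proof. by move/eqP; apply: Cinv_l. Qed.
Lemma Cinv0 : Cinv (RtoC 0 : CC) = RtoC 0.
Proof. apply: injective_projections => /=; rewrite /Rdiv; ring. Qed.
HB.instance Definition _ := GRing.ComNzRing_isField.Build CC CmulVf Cinv0.

Lemma prod_one_sub_primitive_root (z y : CC) n : n.-primitive_root z ->
  \prod_(0 <= i < n) (1 - y * z ^+ i) = 1 - y ^+ n.
Proof.
move=> zprim; have n_gt0 := prim_order_gt0 zprim.
have [->|y_neq0] := eqVneq y 0.
  rewrite expr0n gtn_eqF // subr0.
  by rewrite big1 // => i _; rewrite mul0r subr0.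
have := congr1 (fun P => P.[y^-1]) (factor_Xn_sub_1 zprim).
rewrite horner_prod hornerD hornerN hornerXn hornerC => E.
have E2 : \prod_(0 <= i < n) (y * (y^-1 - z ^+ i)) = y ^+ n * (y^-1 ^+ n - 1).
  rewrite big_split /= prodr_const_nat subn0 -E; congr (_ * _).
  by apply: eq_bigr => i _; rewrite hornerXsubC.
rewrite mulrBr -exprMn mulfV // expr1n mulr1 in E2.
by rewrite -E2; apply: eq_bigr => i _; rewrite mulrBr mulfV.
Qed.

Lemma prod_cprod (f : nat -> CC) n : \prod_(0 <= i < n) f i = cprod f n.
Proof. by elim: n => [|n IH]; rewrite ?big_nil // big_nat_recr //= IH. Qed.

Lemma exp_Cpow (x : CC) n : x ^+ n = Cpow x n.
Proof. by elim: n => [|n IH] //; rewrite exprS IH. Qed.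

Lemma cprod_one_sub_root (z y : C) n : (0 < n)%coq_nat -> Cpow z n = RtoC 1 ->
  (forall i, (0 < i)%coq_nat -> (i < n)%coq_nat -> Cpow z i <> RtoC 1) ->
  cprod (fun i => Cminus (RtoC 1) (Cmult y (Cpow z i))) n = Cminus (RtoC 1) (Cpow y n).
Proof.
move=> /ltP n_gt0 zn z_ne1.
have zprim : n.-primitive_root (z : CC).
  apply/andP; split => //; apply/forallP => i; rewrite unity_rootE exp_Cpow.
  have [->|ne] := eqVneq i.+1 n; first by rewrite zn !eqxx.
  apply/eqP/negbTE/eqP; apply: z_ne1; apply/ltP => //.
  by rewrite ltn_neqAle ne ltn_ord.
rewrite -prod_cprod.
have -> : Cminus (RtoC 1) (Cpow y n) = 1 - (y : CC) ^+ n by rewrite exp_Cpow.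
rewrite -(@prod_one_sub_primitive_root z y n zprim).
by apply: eq_bigr => i _; rewrite exp_Cpow.
Qed.

End ComplexField.

Lemma Cmod_cprod_pos (f : nat -> C) n : (forall j, (j < n)%nat -> f j <> 0%C) -> 0 < Cmod (cprod f n).
Proof.
  induction n as [|n IH]; intros Hf; simpl.
  - rewrite Cmod_1. lra.
  - rewrite Cmod_mult. apply Rmult_lt_0_compat.
    + apply IH. intros j Hj. apply Hf. lia.
    + apply Cmod_gt_0, Hf. lia.
Qed.

Lemma sum_ln_Cmod_cprod (f : nat -> C) n : (forall j, (j <= n)%nat -> f j <> 0%C) ->
  sum_f_R0 (fun j => ln (Cmod (f j))) n = ln (Cmod (cprod f (S n))).
Proof.
  induction n as [|n IH]; intros Hf.
  - simpl. rewrite Cmult_1_l. reflexivity.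
  - simpl sum_f_R0. rewrite IH by (intros j Hj; apply Hf; lia).
    change (cprod f (S (S n))) with (cprod f (S n) * f (S n))%C.
    rewrite Cmod_mult, ln_mult; [reflexivity| |apply Cmod_gt_0, Hf; lia].
    apply Cmod_cprod_pos. intros j Hj. apply Hf. lia.
Qed.

Lemma prime_mod_mul_eq0 p a b : prime (Z.of_nat p) -> ((a * b) mod p = 0)%nat ->
  (a mod p = 0)%nat \/ (b mod p = 0)%nat.
Proof.
  intros Hp H. pose proof (prime_ge_2 _ Hp).
  assert (Hd : (Z.of_nat p | Z.of_nat a * Z.of_nat b)%Z).
  { apply Z.mod_divide; [lia|]. rewrite <- Nat2Z.inj_mul, <- Nat2Z.inj_mod, H. reflexivity. }
  destruct (prime_mult _ Hp _ _ Hd) as [Ha|Hb]; [left|right].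
  - apply Zdivide_mod in Ha. rewrite <- Nat2Z.inj_mod in Ha. lia.
  - apply Zdivide_mod in Hb. rewrite <- Nat2Z.inj_mod in Hb. lia.
Qed.

Lemma one_sub_neq_0 (y : C) : Cmod y < 1 -> (1 - y)%C <> 0%C.
Proof.
  intros Hy E. assert (Ey : y = (1 - (1 - y))%C) by ring.
  rewrite E in Ey. replace (1 - 0)%C with (RtoC 1) in Ey by ring.
  rewrite Ey, Cmod_1 in Hy. lra.
Qed.

(* [zeta p ^ m] is a primitive [p]-th root of unity because [p] is prime. *)
Lemma sum_ln_Cmod_one_sub_zeta p m (y : C) : prime (Z.of_nat p) -> (m mod p <> 0)%nat ->
  Cmod y < 1 ->
  sum_f_R0 (fun j => ln (Cmod (1 - y * (zeta p ^ m) ^ j))) (p - 1) = ln (Cmod (1 - y ^ p)).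
Proof.
  intros Hp Hm Hy. pose proof (prime_ge_2 _ Hp).
  rewrite sum_ln_Cmod_cprod.
  - replace (S (p - 1)) with p by lia.
    rewrite ComplexField.cprod_one_sub_root; [reflexivity|lia| |].
    + rewrite <- Cpow_mult_r. apply zeta_pow_eq1; [lia|]. apply Nat.Div0.mod_mul.
    + intros i Hi1 Hi2. rewrite <- Cpow_mult_r, zeta_pow_eq1 by lia. intros Hmi.
      destruct (prime_mod_mul_eq0 _ _ _ Hp Hmi) as [|Hi]; [contradiction|].
      rewrite Nat.mod_small in Hi; lia.
  - intros j _. apply one_sub_neq_0. rewrite <- Cpow_mult_r, Cmod_mul_zeta_pow. exact Hy.
Qed.

Definition Jpow (x : C) (m : nat) : R := Jfun (x ^ m)%C.

Lemma Jpow_mul (x : C) a b : Jpow x (a * b) = Jpow (x ^ a)%C b.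
Proof. unfold Jpow. rewrite Cpow_mult_r. reflexivity. Qed.

Definition hecke_Jpow (p : nat) (q : C) (m : nat) : R :=
  if (m mod p =? 0)%nat then INR p ^ 2 * Jpow q (m / p) else Jpow q m.

Lemma Jpow_distribution p (w : C) m : prime (Z.of_nat p) -> 0 < Cmod w < 1 ->
  sum_f_R0 (fun j => INR p * Jpow (w * zeta p ^ j)%C m) (p - 1) = hecke_Jpow p (w ^ p)%C m.
Proof.
  intros Hp Hw. pose proof (prime_ge_2 _ Hp). unfold hecke_Jpow.
  assert (Hterm : forall j, ((w * zeta p ^ j) ^ m)%C = (w ^ m * (zeta p ^ m) ^ j)%C).
  { intros j. rewrite Cpow_mult_l, <- !Cpow_mult_r, Nat.mul_comm. reflexivity. }
  destruct (Nat.eqb_spec (m mod p) 0) as [Hm|Hm].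
  - assert (Em : (p * (m / p))%nat = m) by (pose proof (Nat.div_mod_eq m p); lia).
    rewrite <- Jpow_mul, Em.
    rewrite (sum_eq _ (fun _ => INR p * Jpow w m)).
    + rewrite sum_cte. replace (S (p - 1)) with p by lia. ring.
    + intros j _. unfold Jpow. rewrite Hterm, <- Cpow_mult_r.
      rewrite (proj2 (zeta_pow_eq1 p (m * j) ltac:(lia))), Cmult_1_r; [reflexivity|].
      rewrite Nat.Div0.mul_mod, Hm. apply Nat.Div0.mod_0_l.
  - assert (Hy : 0 < Cmod (w ^ m)%C < 1).
    { apply Cmod_pow_bounds; [exact Hw|]. destruct m; [contradict Hm; apply Nat.Div0.mod_0_l|lia]. }
    rewrite (sum_eq _ (fun j => ln (Cmod (1 - w ^ m * (zeta p ^ m) ^ j)%C) * (INR p * ln (Cmod (w ^ m)%C)))).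
    + rewrite <- scal_sum, sum_ln_Cmod_one_sub_zeta by (easy || lra).
      unfold Jpow, Jfun. rewrite <- Cpow_mult_r, Nat.mul_comm, Cpow_mult_r.
      rewrite !Cmod_pow, !ln_pow by (try apply pow_lt; lra). ring.
    + intros j _. unfold Jpow, Jfun. rewrite Hterm, Cmod_mult, (Cmod_pow (zeta p ^ m)), Cmod_zeta_pow, pow1, Rmult_1_r. ring.
Qed.

Lemma ln_le_sub_1 x : 0 < x -> ln x <= x - 1.
Proof.
  intros Hx. destruct (Req_dec x 1) as [->|Hx1].
  - rewrite ln_1. lra.
  - rewrite <- (ln_exp (x - 1)). apply ln_le; [exact Hx|].
    left. replace x with (1 + (x - 1)) at 1 by ring. apply exp_ineq1. lra.
Qed.

Lemma Rabs_ln_Cmod_one_sub_le (y : C) : Cmod y < 1 ->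
  Rabs (ln (Cmod (1 - y))) <= Cmod y / (1 - Cmod y).
Proof.
  intros Hy. pose proof (Cmod_ge_0 y) as Ht. set (t := Cmod y) in *.
  assert (Hu : Cmod (1 - y) <= 1 + t).
  { unfold Cminus. eapply Rle_trans; [apply Cmod_triangle|]. rewrite Cmod_opp, Cmod_1. unfold t. lra. }
  assert (Hl : 1 - t <= Cmod (1 - y)).
  { pose proof (Cmod_triangle (1 - y) y) as T. replace (1 - y + y)%C with (RtoC 1) in T by ring.
    rewrite Cmod_1 in T. unfold t. lra. }
  assert (Hinv : 0 < / (1 - t)) by (apply Rinv_0_lt_compat; lra).
  assert (Hup : ln (Cmod (1 - y)) <= t).
  { pose proof (ln_le_sub_1 (Cmod (1 - y))). lra. }
  assert (Hlow : - (t / (1 - t)) <= ln (Cmod (1 - y))).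
  { apply Rle_trans with (ln (1 - t)); [|apply ln_le; lra].
    pose proof (ln_le_sub_1 (/ (1 - t)) Hinv) as H. rewrite ln_Rinv in H by lra.
    replace (/ (1 - t) - 1) with (t / (1 - t)) in H by (field; lra). lra. }
  assert (t <= t / (1 - t)).
  { unfold Rdiv. assert ((1 - t) * / (1 - t) = 1) by (field; lra). nra. }
  apply Rabs_le. lra.
Qed.

Lemma Rabs_Jpow_le (x : C) m : 0 < Cmod x < 1 ->
  Rabs (Jpow x m) <= (- ln (Cmod x) / (1 - Cmod x)) * (INR m * Cmod x ^ m).
Proof.
  intros [H0 H1]. unfold Jpow, Jfun. set (r := Cmod x) in *.
  assert (Hlr : ln r < 0) by (rewrite <- ln_1; apply ln_increasing; lra).
  destruct m as [|m].
  - simpl. rewrite Cmod_1, ln_1, Rmult_0_l, Rabs_R0. lra.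
  - assert (Hr0 : 0 < r ^ S m) by (apply pow_lt; lra).
    assert (Hr1 : r ^ S m <= r).
    { simpl. assert (r ^ m <= 1).
      { destruct m; [simpl; lra|left; apply pow_lt_1_compat; [lra|lia]]. }
      nra. }
    assert (Hn : 0 < INR (S m)) by (apply lt_0_INR; lia).
    pose proof (Rabs_ln_Cmod_one_sub_le (x ^ S m)%C) as B.
    rewrite Cmod_pow in B |- *. fold r in B |- *.
    rewrite ln_pow, Rabs_mult, Rabs_mult, Rabs_pos_eq, Rabs_left by lra.
    assert (B2 : r ^ S m / (1 - r ^ S m) <= r ^ S m / (1 - r)).
    { unfold Rdiv. apply Rmult_le_compat_l; [lra|]. apply Rinv_le_contravar; lra. }
    replace (- ln r / (1 - r) * (INR (S m) * r ^ S m))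
      with (INR (S m) * - ln r * (r ^ S m / (1 - r))) by (field; lra).
    apply Rmult_le_compat_l; [nra|]. specialize (B ltac:(lra)). lra.
Qed.

Lemma ex_series_INR_pow r : 0 < r < 1 -> ex_series (fun m => INR m * r ^ m).
Proof.
  intros Hr. apply ex_series_incr_1, ex_series_Rabs.
  apply (ex_series_DAlembert _ (r * (1 + 0))); [lra| |].
  - intros n. assert (0 < INR (S n)) by (apply lt_0_INR; lia).
    assert (0 < r ^ S n) by (apply pow_lt; lra). nra.
  - apply is_lim_seq_ext with (fun n => r * (1 + / INR (S n))).
    + intros n. assert (0 < INR (S n)) by (apply lt_0_INR; lia).
      assert (0 < r ^ S n) by (apply pow_lt; lra).
      rewrite Rabs_pos_eq.
      * rewrite (S_INR (S n)). change (r ^ S (S n)) with (r * r ^ S n). field. split; lra.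
      * assert (0 < INR (S n) * r ^ S n) by nra.
        apply Rmult_le_pos; [|left; apply Rinv_0_lt_compat; lra].
        apply Rmult_le_pos; [apply pos_INR|apply pow_le; lra].
    + apply is_lim_seq_mult'; [apply is_lim_seq_const|].
      apply is_lim_seq_plus'; [apply is_lim_seq_const|].
      apply (is_lim_seq_inv _ p_infty); [|discriminate].
      apply (is_lim_seq_incr_1 INR p_infty), is_lim_seq_INR.
Qed.

Lemma ex_series_Jpow_dominated (x : C) (u : nat -> R) : 0 < Cmod x < 1 ->
  (forall m, Rabs (u m) <= Rabs (Jpow x m)) -> ex_series u.
Proof.
  intros Hx Hu.
  apply (@ex_series_le R_AbsRing R_CompleteNormedModule _
    (fun m => (- ln (Cmod x) / (1 - Cmod x)) * (INR m * Cmod x ^ m))).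
  - intros m. eapply Rle_trans; [apply Hu|]. apply Rabs_Jpow_le, Hx.
  - apply (@ex_series_scal_l R_AbsRing R_NormedModule), ex_series_INR_pow, Hx.
Qed.

Lemma is_series_is_lim_seq (u : nat -> R) l : is_series u l <-> is_lim_seq (sum_f_R0 u) l.
Proof.
  split; intros H.
  - apply (is_lim_seq_ext (sum_n u)); [intros; apply sum_n_Reals|exact H].
  - apply (is_lim_seq_ext _ (sum_n u)) in H; [exact H|intros; symmetry; apply sum_n_Reals].
Qed.

Section ArithmeticProgression.
Variables (d r : nat) (u : nat -> R).
Hypothesis Hd : (0 < d)%nat.
Hypothesis Hr : (r < d)%nat.
Hypothesis Hu : forall m, (m mod d <> r)%nat -> u m = 0.

Let u_off_prog m : (forall n, m <> d * n + r)%nat -> u m = 0.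
Proof. intros Hm. apply Hu. intros E. apply (Hm (m / d)%nat). rewrite <- E. apply Nat.div_mod_eq. Qed.

Let partial_sum_below_r m : (m < r)%nat -> sum_f_R0 u m = 0.
Proof.
  induction m as [|m IH]; intros Hm; simpl.
  - apply u_off_prog. intros n. nia.
  - rewrite IH, u_off_prog by (intros; nia || lia). ring.
Qed.

Let partial_sum_gap n s : (s < d)%nat -> sum_f_R0 u (d * n + r + s) = sum_f_R0 u (d * n + r).
Proof.
  induction s as [|s IH]; intros Hs.
  - rewrite Nat.add_0_r. reflexivity.
  - replace (d * n + r + S s)%nat with (S (d * n + r + s)) by lia. simpl.
    rewrite IH by lia. rewrite u_off_prog; [ring|]. intros n' E.
    destruct (Nat.le_gt_cases n' n) as [Hn|Hn]; nia.
Qed.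

Let partial_sum_arith_prog n :
  sum_f_R0 u (d * n + r) = sum_f_R0 (fun i => u (d * i + r)%nat) n.
Proof.
  induction n as [|n IH].
  - simpl. rewrite Nat.mul_0_r, Nat.add_0_l.
    destruct (Nat.eq_dec r 0) as [E|Hr0]; [rewrite E; reflexivity|].
    replace r with (S (r - 1)) at 1 by lia. simpl.
    rewrite partial_sum_below_r by lia. replace (S (r - 1)) with r by lia. ring.
  - replace (d * S n + r)%nat with (S (d * n + r + (d - 1))) by nia. simpl.
    rewrite partial_sum_gap, IH by lia. do 2 f_equal. nia.
Qed.

Lemma is_series_arith_prog l : is_series u l <-> is_series (fun n => u (d * n + r)%nat) l.
Proof.
  rewrite !is_series_is_lim_seq. split; intros H.
  - apply is_lim_seq_ext with (fun n => sum_f_R0 u (d * n + r)).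
    + apply partial_sum_arith_prog.
    + apply (is_lim_seq_subseq (sum_f_R0 u) l (fun n => d * n + r)%nat); [|exact H].
      intros P [M HM]. exists M. intros n Hn. apply HM. nia.
  - apply is_lim_seq_ext_loc with (fun m => sum_f_R0 (fun i => u (d * i + r)%nat) ((m - r) / d)).
    + exists r. intros m Hm.
      rewrite <- partial_sum_arith_prog.
      assert (Hdm := Nat.div_mod_eq (m - r) d).
      assert (Hmd := Nat.mod_upper_bound (m - r) d ltac:(lia)).
      rewrite <- (partial_sum_gap _ ((m - r) mod d)) by exact Hmd. f_equal. lia.
    + apply (is_lim_seq_subseq _ l (fun m => (m - r) / d)%nat); [|exact H].
      intros P [M HM]. exists (d * M + r)%nat. intros n Hn. apply HM.
      apply Nat.div_le_lower_bound; lia.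
Qed.

End ArithmeticProgression.

Lemma Series_arith_prog (d r : nat) (u : nat -> R) : (0 < d)%nat -> (r < d)%nat ->
  (forall m, (m mod d <> r)%nat -> u m = 0) -> ex_series u ->
  Series (fun n => u (d * n + r)%nat) = Series u.
Proof.
  intros Hd Hr Hu [l Hl]. rewrite (is_series_unique _ _ Hl).
  apply is_series_unique, (is_series_arith_prog d r u Hd Hr Hu), Hl.
Qed.

Definition restrict_mod (N a r : nat) (f : nat -> R) (m : nat) : R :=
  if ((a * m) mod N =? r)%nat then f m else 0.

Lemma ex_series_restrict_mod_Jpow (x : C) N a r : 0 < Cmod x < 1 ->
  ex_series (restrict_mod N a r (Jpow x)).
Proof.
  intros Hx. apply (ex_series_Jpow_dominated x); [exact Hx|]. intros m. unfold restrict_mod.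
  destruct (_ =? _)%nat; [lra|]. rewrite Rabs_R0. apply Rabs_pos.
Qed.

Definition odd_series (N a k : nat) (f : nat -> R) : R :=
  Series (restrict_mod N a k f) - Series (restrict_mod N a (N - k) f).

Lemma Series_restrict_mod_1 N r f : (r < N)%nat -> ex_series (restrict_mod N 1 r f) ->
  Series (fun n => f (N * n + r)%nat) = Series (restrict_mod N 1 r f).
Proof.
  intros Hr Hf. transitivity (Series (fun n => restrict_mod N 1 r f (N * n + r)%nat)).
  - apply Series_ext. intros n. unfold restrict_mod.
    rewrite Nat.mul_1_l, Nat.add_comm, Nat.mul_comm, Nat.Div0.mod_add, Nat.mod_small, Nat.eqb_refl by exact Hr.
    reflexivity.
  - apply Series_arith_prog; [lia|exact Hr| |exact Hf].
    intros m Hm. unfold restrict_mod. rewrite Nat.mul_1_l.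
    destruct (Nat.eqb_spec (m mod N) r); [contradiction|reflexivity].
Qed.

Lemma Jsigma_odd_series (s x : C) N k : (1 <= k < N)%nat -> Qof s = (x ^ N)%C ->
  0 < Cmod x < 1 ->
  Jsigma s (x ^ k)%C
  = odd_series N 1 k (Jpow x) + 1 / 3 * (INR N * ln (Cmod x)) ^ 2 * B3 (INR k / INR N).
Proof.
  intros Hk HQ Hx.
  assert (Hxk : (x ^ k)%C <> 0%C) by (apply Cpow_nz, Cmod_gt_0; lra).
  assert (Hln : ln (Cmod x) < 0) by (rewrite <- ln_1; apply ln_increasing; lra).
  assert (HN : 0 < INR N) by (apply lt_0_INR; lia).
  (* [cpow] is the same fixpoint as Coquelicot's [Cpow], hence [change] below. *)
  assert (Hpos : Series (fun n => Jfun (x ^ k * cpow (x ^ N) n))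
                 = Series (restrict_mod N 1 k (Jpow x))).
  { rewrite <- (Series_restrict_mod_1 N k (Jpow x)) by (lia || apply ex_series_restrict_mod_Jpow, Hx).
    apply Series_ext. intros n. unfold Jpow.
    change cpow with Cpow. rewrite <- Cpow_mult_r, <- Cpow_add_r. do 2 f_equal. lia. }
  assert (Hneg : Series (fun n => Jfun (/ x ^ k * cpow (x ^ N) (S n)))
                 = Series (restrict_mod N 1 (N - k) (Jpow x))).
  { rewrite <- (Series_restrict_mod_1 N (N - k) (Jpow x)) by (lia || apply ex_series_restrict_mod_Jpow, Hx).
    apply Series_ext. intros n. unfold Jpow.
    change cpow with Cpow. rewrite <- Cpow_mult_r.
    replace (N * S n)%nat with (k + (N * n + (N - k)))%nat by nia.
    rewrite Cpow_add_r, Cmult_assoc, Cinv_l, Cmult_1_l by exact Hxk. reflexivity. }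
  unfold Jsigma, odd_series. cbv zeta. rewrite HQ, Hpos, Hneg, !Cmod_pow, !ln_pow by lra.
  replace (INR k * ln (Cmod x) / (INR N * ln (Cmod x))) with (INR k / INR N) by (field; lra).
  reflexivity.
Qed.

Lemma Jsigma_Qof (s : C) N k : (1 <= k < N)%nat -> 0 < Im s ->
  Jsigma (INR N * s) (Qof s ^ k)%C
  = odd_series N 1 k (Jpow (Qof s)) + 1 / 3 * (INR N * ln (Cmod (Qof s))) ^ 2 * B3 (INR k / INR N).
Proof.
  intros Hk Hs. apply Jsigma_odd_series; [exact Hk|apply Qof_nat|apply Cmod_Qof_bounds, Hs].
Qed.

Lemma sum_f_R0_Series (F : nat -> nat -> R) n : (forall j, ex_series (F j)) ->
  sum_f_R0 (fun j => Series (F j)) n = Series (fun m => sum_f_R0 (fun j => F j m) n).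
Proof.
  intros HF.
  enough (H : sum_f_R0 (fun j => Series (F j)) n = Series (fun m => sum_f_R0 (fun j => F j m) n)
              /\ ex_series (fun m => sum_f_R0 (fun j => F j m) n)) by apply H.
  induction n as [|n [IH HIH]]; simpl.
  - split; [reflexivity|apply HF].
  - split.
    + rewrite IH, Series_plus by auto. reflexivity.
    + apply (@ex_series_plus R_AbsRing R_NormedModule); auto.
Qed.

Lemma sum_Series_restrict_mod_distribution p (w : C) N r :
  prime (Z.of_nat p) -> 0 < Cmod w < 1 ->
  sum_f_R0 (fun j => INR p * Series (restrict_mod N 1 r (Jpow (w * zeta p ^ j)%C))) (p - 1)
  = Series (restrict_mod N 1 r (hecke_Jpow p (w ^ p)%C)).
Proof.
  intros Hp Hw.
  assert (Hwj : forall j, 0 < Cmod (w * zeta p ^ j)%C < 1)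
    by (intros j; rewrite Cmod_mul_zeta_pow; exact Hw).
  rewrite (sum_eq _ (fun j => Series (fun m => INR p * restrict_mod N 1 r (Jpow (w * zeta p ^ j)%C) m)))
    by (intros; symmetry; apply Series_scal_l).
  rewrite sum_f_R0_Series.
  - apply Series_ext. intros m. unfold restrict_mod.
    destruct (_ =? _)%nat.
    + apply Jpow_distribution; assumption.
    + rewrite (sum_eq _ (fun _ => 0)) by (intros; ring). rewrite sum_cte. ring.
  - intros j. apply (@ex_series_scal_l R_AbsRing R_NormedModule), ex_series_restrict_mod_Jpow, Hwj.
Qed.

Lemma is_series_restrict_mod_multiples p N r (f : nat -> R) l : (0 < p)%nat ->
  is_series (restrict_mod N p r (fun n => f (p * n)%nat)) l ->
  is_series (fun m => if (m mod p =? 0)%nat then restrict_mod N 1 r f m else 0) l.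
Proof.
  intros Hp Hl. apply (is_series_arith_prog p 0); [exact Hp|exact Hp| |].
  - intros m Hm. apply Nat.eqb_neq in Hm. rewrite Hm. reflexivity.
  - apply (is_series_ext (restrict_mod N p r (fun n => f (p * n)%nat))); [|exact Hl].
    intros n. unfold restrict_mod.
    rewrite Nat.add_0_r, Nat.mul_1_l, (Nat.mul_comm p n), Nat.Div0.mod_mul. reflexivity.
Qed.

Lemma Series_restrict_mod_hecke p (q : C) N r : (0 < p)%nat -> 0 < Cmod q < 1 ->
  Series (restrict_mod N 1 r (hecke_Jpow p q))
  = Series (restrict_mod N 1 r (Jpow q)) - Series (restrict_mod N p r (Jpow (q ^ p)%C))
    + INR p ^ 2 * Series (restrict_mod N p r (Jpow q)).
Proof.
  intros Hp Hq.
  assert (Hqp : 0 < Cmod (q ^ p)%C < 1) by (apply Cmod_pow_bounds; [exact Hq|lia]).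
  set (on_multiples := fun (f : nat -> R) m => if (m mod p =? 0)%nat then restrict_mod N 1 r f m else 0).
  assert (HD : is_series (on_multiples (Jpow q)) (Series (restrict_mod N p r (Jpow (q ^ p)%C)))).
  { apply is_series_restrict_mod_multiples; [exact Hp|].
    apply (is_series_ext (restrict_mod N p r (Jpow (q ^ p)%C))).
    - intros n. unfold restrict_mod. rewrite Jpow_mul. reflexivity.
    - apply Series_correct, ex_series_restrict_mod_Jpow, Hqp. }
  assert (HE : is_series (on_multiples (fun m => Jpow q (m / p)))
                 (Series (restrict_mod N p r (Jpow q)))).
  { apply is_series_restrict_mod_multiples; [exact Hp|].
    apply (is_series_ext (restrict_mod N p r (Jpow q))).
    - intros n. unfold restrict_mod. rewrite Nat.mul_comm, Nat.div_mul by lia. reflexivity.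
    - apply Series_correct, ex_series_restrict_mod_Jpow, Hq. }
  assert (Hsplit : forall m, restrict_mod N 1 r (Jpow q) m - on_multiples (Jpow q) m
      + INR p ^ 2 * on_multiples (fun m => Jpow q (m / p)) m = restrict_mod N 1 r (hecke_Jpow p q) m).
  { intros m. unfold on_multiples, restrict_mod, hecke_Jpow.
    destruct (_ mod N =? r)%nat, (m mod p =? 0)%nat; ring. }
  apply is_series_unique, (is_series_ext _ _ _ Hsplit).
  apply (@is_series_plus R_AbsRing R_NormedModule); [|apply (@is_series_scal_l R_AbsRing R_NormedModule), HE].
  apply (@is_series_minus R_AbsRing R_NormedModule); [|exact HD].
  apply Series_correct, ex_series_restrict_mod_Jpow, Hq.
Qed.

Lemma restrict_mod_twist_1 N p r f m : (p mod N = 1)%nat ->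
  restrict_mod N p r f m = restrict_mod N 1 r f m.
Proof.
  intros H. unfold restrict_mod.
  rewrite Nat.Div0.mul_mod, H, !Nat.mul_1_l, Nat.Div0.mod_mod. reflexivity.
Qed.

Lemma restrict_mod_twist_0 N p r f m : (p mod N = 0)%nat -> (1 <= r)%nat ->
  restrict_mod N p r f m = 0.
Proof.
  intros H Hr. unfold restrict_mod.
  rewrite Nat.Div0.mul_mod, H, Nat.Div0.mod_0_l.
  destruct (Nat.eqb_spec 0 r); [lia|reflexivity].
Qed.

Lemma restrict_mod_twist_opp N p r f m : (p mod N = N - 1)%nat -> (1 <= r < N)%nat ->
  restrict_mod N p r f m = restrict_mod N 1 (N - r) f m.
Proof.
  intros H Hr. unfold restrict_mod. rewrite Nat.mul_1_l, Nat.Div0.mul_mod, H.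
  assert (Hs := Nat.mod_upper_bound m N ltac:(lia)).
  set (s := (m mod N)%nat) in *.
  destruct (Nat.eq_dec s 0) as [E|E].
  - rewrite E, Nat.mul_0_r, Nat.Div0.mod_0_l.
    destruct (Nat.eqb_spec 0 r), (Nat.eqb_spec 0 (N - r)); lia || reflexivity.
  - replace (((N - 1) * s) mod N)%nat with (N - s)%nat
      by (apply (Nat.mod_unique _ _ (s - 1)); [lia|nia]).
    destruct (Nat.eqb_spec (N - s) r), (Nat.eqb_spec s (N - r)); lia || reflexivity.
Qed.

Lemma odd_series_twist N p k f : (1 <= k < N)%nat ->
  (p mod N = 1 \/ p mod N = N - 1 \/ p mod N = 0)%nat ->
  odd_series N p k f = chiN N p * odd_series N 1 k f.
Proof.
  intros Hk HpN. unfold odd_series, chiN.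
  destruct (Nat.eqb_spec (p mod N) 1) as [H1|H1].
  - rewrite !(Series_ext (restrict_mod N p _ f) (restrict_mod N 1 _ f))
      by (intros; apply restrict_mod_twist_1, H1).
    ring.
  - destruct (Nat.eqb_spec (p mod N) (N - 1)) as [Hm1|Hm1].
    + rewrite (Series_ext (restrict_mod N p k f) (restrict_mod N 1 (N - k) f))
        by (intros; apply restrict_mod_twist_opp; [exact Hm1|lia]).
      rewrite (Series_ext (restrict_mod N p (N - k) f) (restrict_mod N 1 k f)).
      * ring.
      * intros m. rewrite restrict_mod_twist_opp by (exact Hm1 || lia).
        replace (N - (N - k))%nat with k by lia. reflexivity.
    + assert (H0 : (p mod N = 0)%nat) by lia.
      rewrite !(Series_ext (restrict_mod N p _ f) (fun _ => 0 * 0))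
        by (intros; rewrite restrict_mod_twist_0 by (exact H0 || lia); ring).
      rewrite Series_scal_l. ring.
Qed.

Lemma sum_odd_series_distribution p (w : C) N k : prime (Z.of_nat p) -> 0 < Cmod w < 1 ->
  sum_f_R0 (fun j => INR p * odd_series N 1 k (Jpow (w * zeta p ^ j)%C)) (p - 1)
  = odd_series N 1 k (Jpow (w ^ p)%C) - odd_series N p k (Jpow ((w ^ p) ^ p)%C)
    + INR p ^ 2 * odd_series N p k (Jpow (w ^ p)%C).
Proof.
  intros Hp Hw. pose proof (prime_ge_2 _ Hp).
  assert (Hq : 0 < Cmod (w ^ p)%C < 1) by (apply Cmod_pow_bounds; [exact Hw|lia]).
  unfold odd_series.
  rewrite (sum_eq _ (fun j => INR p * Series (restrict_mod N 1 k (Jpow (w * zeta p ^ j)%C))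
                   - INR p * Series (restrict_mod N 1 (N - k) (Jpow (w * zeta p ^ j)%C))))
    by (intros; ring).
  rewrite minus_sum, !sum_Series_restrict_mod_distribution, !Series_restrict_mod_hecke by (lia || assumption).
  ring.
Qed.

Theorem mainTheorem15 (N k p : nat) (tau : C)
  (hN : (3 <= N)%nat) (hk1 : (1 <= k)%nat) (hk2 : (k <= N - 1)%nat)
  (hgcd : Nat.gcd N k = 1%nat)
  (hp : prime (Z.of_nat p)) (hodd : Nat.odd p = true)
  (hpN : Nat.modulo p N = 1%nat \/ Nat.modulo p N = (N - 1)%nat \/ Nat.modulo p N = 0%nat)
  (htau : 0 < snd tau) :
  let q := Qof tau in
  let qj := fun j : nat =>
    Qof (Cdiv (Cplus tau (RtoC (INR j))) (RtoC (INR p))) in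
  (1 + chiN N p * INR p ^ 2) * Jsigma (Cmult (RtoC (INR N)) tau) (cpow q k)
  = sum_f_R0 (fun j => INR p *
        Jsigma (Cdiv (Cmult (RtoC (INR N)) (Cplus tau (RtoC (INR j)))) (RtoC (INR p)))
               (cpow (qj j) k)) (p - 1)
    + chiN N p * Jsigma (Cmult (RtoC (INR (N * p))) tau) (cpow q (p * k)).
Proof.
  intros q qj. unfold q, qj. clear q qj. change cpow with Cpow.
  pose proof (prime_ge_2 _ hp) as Hp2.
  assert (Hk : (1 <= k < N)%nat) by lia.
  assert (HP : 0 < INR p) by (apply lt_0_INR; lia).
  set (w := Qof (tau / INR p)).
  assert (Hw : 0 < Cmod w < 1).
  { apply Cmod_Qof_bounds. rewrite Im_div_nat by lia. apply Rdiv_lt_0_compat; assumption. }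
  rewrite (Jsigma_Qof tau N k), mult_INR, RtoC_mult, <- Cmult_assoc, Cpow_mult_r, <- Qof_nat,
    (Jsigma_Qof (INR p * tau)) by (try exact Hk; unfold Im; simpl; nra).
  rewrite (sum_eq _ (fun j => INR p * odd_series N 1 k (Jpow (w * zeta p ^ j)%C)
      + INR p * (1 / 3 * (INR N * ln (Cmod w)) ^ 2 * B3 (INR k / INR N)))).
  2:{ intros j _. unfold Cdiv. rewrite <- Cmult_assoc. fold ((tau + INR j) / INR p)%C.
      rewrite Jsigma_Qof, Qof_add_nat_div, Cmod_mul_zeta_pow by (try exact Hk; try lia;
        rewrite Im_div_nat by lia; simpl; apply Rdiv_lt_0_compat; lra).
      fold w. ring. }
  rewrite plus_sum, sum_cte, sum_odd_series_distribution by assumption.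
  rewrite !(odd_series_twist N p k) by (lia || assumption).
  rewrite Qof_nat, <- (Qof_div_nat_pow tau p) by lia. fold w.
  rewrite !Cmod_pow, !ln_pow by (try apply pow_lt; lra).
  replace (INR (S (p - 1))) with (INR p) by (f_equal; lia).
  ring.
Qed.
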